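(* Let $F_2$ be the free group on generators $a,b$, let $H\leq F_2$ be a subgroup of finite index that contains an element of odd length, and let $y\in F_2$. Then there exist constants $a_{i,xH}$ (for $i\geq 1$, $xH\in F_2/H$) and an $N\in\mathbb{N}$ such that \[ |yH\cap S_n| = \sum_{i=1}^{N}\sum_{xH\in F_2/H}a_{i,xH}\cdot |xH\cap S_{n-i}| \] for all $n\geq N+1$.
   Context: Let $\Xi=\{a,b,a^{-1},b^{-1}\}$. An element $g\in F_2$ has length $n$ if $g=x_1x_2\cdots x_n$ with $x_i\in\Xi$ and $x_{i+1}\neq x_i^{-1}$ for each $i$ (reduced form); the identity has length $0$. For $n\geq 0$, $S_n\subseteq F_2$ denotes the set of elements of length $n$. The constants $a_{i,xH}$ and $N$ do not depend on $n$. *)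

(* The free group F_2 on a, b is modelled by reduced words. *)
From mathcomp Require Import all_boot all_order all_algebra.
Set Implicit Arguments. Unset Strict Implicit. Unset Printing Implicit Defensive.

(* A letter of Xi = {a, b, a^-1, b^-1}: (is_b, is_inverse). *)
Definition letter := (bool * bool)%type.
Definition linv (x : letter) : letter := (x.1, ~~ x.2).

Definition word := seq letter.

Definition reduced (w : word) : bool := sorted (fun x y => y != linv x) w.

Definition red_cons (x : letter) (w : word) : word :=
  if w is y :: w' then (if y == linv x then w' else x :: w) else [:: x].

Definition wmul (u v : word) : word := foldr red_cons v u.
Definition winv (w : word) : word := rev (map linv w).

Definition is_subgroup (H : pred word) : Prop :=
  (forall w, H w -> reduced w) /\ H [::] /\
  (forall u v, H u -> H v -> H (wmul u v)) /\
  (forall u, H u -> H (winv u)).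

Definition in_coset (H : pred word) (x w : word) : bool :=
  reduced w && H (wmul (winv x) w).

Definition coset_reps (H : pred word) (reps : seq word) : Prop :=
  (forall r, r \in reps -> reduced r) /\
  (forall g, reduced g -> exists2 r, r \in reps & in_coset H r g) /\
  (forall r1 r2, r1 \in reps -> r2 \in reps -> in_coset H r1 r2 -> r1 = r2).

Definition finite_index (H : pred word) : Prop :=
  exists reps, coset_reps H reps.

Definition sphere (n : nat) : seq word :=
  [seq w <- [seq val t | t <- enum {: n.-tuple letter}] | reduced w].

Definition coset_sphere_card (H : pred word) (x : word) (n : nat) : nat :=
  count (in_coset H x) (sphere n).

From mathcomp Require Import all_boot all_order all_algebra.
From mathcomp Require Import zify.
Import GRing.Theory Num.Theory.

(* Let a(x, p, n) be the number of words t of length n in the coset xH such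
   that the word p t is reduced.  Splitting off the first letter l of t gives
   a(x, p, n+1) = sum over l <> p^-1 of a(l^-1 x, l, n), and a(x, p, n) only
   depends on the coset xH.  So |yH ∩ S_n| is a fixed linear functional of the
   powers of one matrix indexed by pairs (letter, coset), and Cayley-Hamilton
   turns this into a linear recurrence of |yH ∩ S_n| with itself, whose
   coefficients can all be put on the coset yH. *)

Section LinearRecurrence.
Variable R : comNzRingType.
Local Open Scope ring_scope.

Lemma horner_mx_sum n (A : 'M[R]_n.+1) (p : {poly R}) :
  horner_mx A p = \sum_(i < size p) p`_i *: A ^+ i.
Proof.
rewrite -{1}[p]coefK poly_def linear_sum; apply: eq_bigr => i _.
by rewrite linearZ /= rmorphXn /= horner_mx_X.
Qed.

Lemma mx_pow_linear_rec n (A : 'M[R]_n) (u : 'rV_n) (v : 'cV_n) :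
  exists c : nat -> R, forall k,
    (u *m A ^+ (k + n) *m v) 0 0 = \sum_(i < n) c i * (u *m A ^+ (k + i) *m v) 0 0.
Proof.
case: n A u v => [|n] A u v.
  by exists (fun=> 0) => k; rewrite big_ord0 !mxE big_ord0.
exists (fun i => - (char_poly A)`_i) => k.
have monic_char : (char_poly A)`_n.+1 = 1.
  by have /monicP := char_poly_monic A; rewrite lead_coefE size_char_poly.
have char_ann : \sum_(i < n.+2) (char_poly A)`_i * (u *m A ^+ (k + i) *m v) 0 0 = 0.
  transitivity ((u *m (A ^+ k *m horner_mx A (char_poly A)) *m v) 0 0).
    rewrite horner_mx_sum size_char_poly mulmx_sumr mulmx_sumr mulmx_suml summxE.
    apply: eq_bigr => i _.
    by rewrite -!scalemxAr -scalemxAl exprD mulmxE [in RHS]mxE.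
  by rewrite Cayley_Hamilton !mulmx0 mul0mx mxE.
move: char_ann; rewrite big_ord_recr /= monic_char mul1r addrC => /eqP.
rewrite addr_eq0 => /eqP ->.
by rewrite -sumrN; apply: eq_bigr => i _; rewrite mulNr.
Qed.

Lemma finite_linear_system_rec (V : finType) (M : V -> V -> R) (u : V -> R)
    (v : nat -> V -> R) (w : nat -> R) :
    (forall n i, v n.+1 i = \sum_j M i j * v n j) ->
    (forall n, w n.+1 = \sum_i u i * v n i) ->
  exists (c : nat -> R) (N : nat), forall m, (N < m)%N ->
    w m = \sum_(1 <= j < N.+1) c j * w (m - j)%N.
Proof.
move=> v_rec w_def.
pose A : 'M[R]_#|V| := \matrix_(a, b) M (enum_val a) (enum_val b).
pose uu : 'rV[R]_#|V| := \row_a u (enum_val a).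
pose vv n : 'cV[R]_#|V| := \col_a v n (enum_val a).
have sum_enum (F : V -> R) : \sum_j F j = \sum_(a < #|V|) F (enum_val a).
  by rewrite -big_enum_val.
have vvE n : vv n = A ^+ n *m vv 0%N.
  elim: n => [|n IHn]; first by rewrite expr0 mul1mx.
  rewrite exprS -mulmxE -mulmxA -IHn; apply/matrixP => a b.
  by rewrite !mxE v_rec sum_enum; apply: eq_bigr => c _; rewrite !mxE.
have wE n : w n.+1 = (uu *m A ^+ n *m vv 0%N) 0 0.
  rewrite -mulmxA -vvE w_def sum_enum mxE.
  by apply: eq_bigr => c _; rewrite !mxE.
have [c c_rec] := mx_pow_linear_rec _ A uu (vv 0%N).
exists (fun j => c (#|V| - j)%N), #|V| => m lt_m.
have -> : m = (m - #|V|.+1 + #|V|).+1 by lia.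
rewrite wE c_rec big_add1 /= big_mkord (reindex_inj rev_ord_inj) /=.
apply: eq_bigr => i _; rewrite -wE; congr (_ * w _).
by have := ltn_ord i; lia.
Qed.

End LinearRecurrence.

Lemma linvK : involutive linv.
Proof. by case=> a b; rewrite /linv /= negbK. Qed.

Lemma red_cons_reduced x w : reduced w -> reduced (red_cons x w).
Proof.
case: w => [|y w] //= w_red.
by case: ifP => [_|/negbT y_x]; [exact: path_sorted w_red | rewrite /reduced /= y_x].
Qed.

Lemma wmul_reduced u w : reduced w -> reduced (wmul u w).
Proof. by move=> w_red; elim: u => //= x u; exact: red_cons_reduced. Qed.

Lemma red_cons_reducedE x w : reduced (x :: w) -> red_cons x w = x :: w.
Proof. by case: w => [|y w] //; rewrite /reduced /= => /andP[/negbTE ->]. Qed.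

Lemma red_consK x w : reduced w -> red_cons x (red_cons (linv x) w) = w.
Proof.
case: w => [|y w] /=; first by rewrite eqxx.
rewrite linvK; case: (eqVneq y x) => [->|y_x] w_red; last by rewrite /= eqxx.
exact: red_cons_reducedE.
Qed.

Lemma wmul_red_cons x u w :
  reduced w -> wmul (red_cons x u) w = red_cons x (wmul u w).
Proof.
move=> w_red; case: u => [|y u] //=.
by case: ifP => //= /eqP ->; rewrite red_consK // wmul_reduced.
Qed.

Lemma wmulA u v w : reduced w -> wmul (wmul u v) w = wmul u (wmul v w).
Proof. by move=> w_red; elim: u => //= x u IHu; rewrite wmul_red_cons // IHu. Qed.

Lemma winvK : involutive winv.
Proof.
by move=> u; rewrite /winv map_rev revK -map_comp map_id_in // => x _; rewrite /= linvK.
Qed.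

Lemma winv_cons x u : winv (x :: u) = winv u ++ [:: linv x].
Proof. by rewrite /winv /= rev_cons cats1. Qed.

Lemma wmulK u w : reduced w -> wmul (winv u) (wmul u w) = w.
Proof.
move=> w_red; elim: u => //= x u IHu.
by rewrite winv_cons /wmul foldr_cat /= -{2}(linvK x) red_consK ?wmul_reduced.
Qed.

Lemma wmulVK u w : reduced w -> wmul u (wmul (winv u) w) = w.
Proof. by move=> w_red; rewrite -{1}(winvK u) wmulK. Qed.

Section Cosets.
Variable H : pred word.

Lemma in_coset_cons x l t :
  reduced (l :: t) -> in_coset H x (l :: t) = in_coset H (linv l :: x) t.
Proof.
move=> lt_red; have t_red : reduced t := path_sorted lt_red.
rewrite /in_coset lt_red t_red.
by rewrite winv_cons linvK /wmul foldr_cat /= red_cons_reducedE.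
Qed.

Lemma in_coset_wmul_nil x : in_coset H (wmul x [::]) =1 in_coset H x.
Proof.
move=> t; rewrite /in_coset; case: (boolP (reduced t)) => //= t_red.
rewrite -[in RHS](wmulK (wmul x [::]) (wmul (winv x) t)) ?wmul_reduced //.
by rewrite wmulA ?wmul_reduced // wmulVK.
Qed.

Hypothesis subH : is_subgroup H.

Lemma in_coset_eq r z : in_coset H r z -> in_coset H r =1 in_coset H z.
Proof.
case: subH => _ [_ [mulH invH]] /andP[z_red rz] t; rewrite /in_coset.
case: (boolP (reduced t)) => //= t_red.
have E : wmul (wmul (winv r) z) (wmul (winv z) t) = wmul (winv r) t.
  by rewrite wmulA ?wmul_reduced // wmulVK.
apply/idP/idP => [rt|zt]; last by rewrite -E mulH.
by rewrite -(wmulK (wmul (winv r) z) (wmul (winv z) t)) ?wmul_reduced // E mulH ?invH.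
Qed.

Variable reps : seq word.
Hypothesis repsH : coset_reps H reps.

(* [wmul x [::]] is the reduced form of x.  The index lives in
   ['I_(size reps).+1] only so that [inord] applies; since [reps] meets every
   coset, the extra value is never reached. *)
Definition coset_index (x : word) : 'I_(size reps).+1 :=
  inord (find (fun r => in_coset H r (wmul x [::])) reps).

Lemma coset_indexP x : in_coset H x =1 in_coset H (nth [::] reps (coset_index x)).
Proof.
case: repsH => _ [reps_cover _] t.
have [r r_in rx] := reps_cover _ (wmul_reduced x [::] isT).
have has_rep : has (fun r => in_coset H r (wmul x [::])) reps by apply/hasP; exists r.
rewrite /coset_index inordK; last by rewrite ltnS ltnW // -has_find.
by rewrite (in_coset_eq _ _ (nth_find [::] has_rep)) in_coset_wmul_nil.
Qed.

End Cosets.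

Lemma count_sphere P n :
  count P (sphere n) = \sum_(t : n.-tuple letter) (reduced t && P t : nat).
Proof.
rewrite /sphere count_filter count_map -sum1_count big_mkcond big_enum /=.
by apply: eq_bigr => t _; rewrite /preim /= andbC; case: (_ && _).
Qed.

Lemma big_tuple_cons {R : Type} {idx : R} (op : Monoid.com_law idx)
    {T : finType} n (F : seq T -> R) :
  \big[op/idx]_(t : n.+1.-tuple T) F t =
    \big[op/idx]_(x : T) \big[op/idx]_(t : n.-tuple T) F (x :: t).
Proof.
rewrite pair_bigA (reindex (fun p : T * n.-tuple T => [tuple of p.1 :: p.2])) //=.
apply: onW_bij; exists (fun t : n.+1.-tuple T => (thead t, [tuple of behead t])).
  by case=> x t /=; congr pair; apply: val_inj.
by move=> t; rewrite [RHS]tuple_eta; apply: val_inj.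
Qed.

Definition coset_sphere_after (H : pred word) (x : word) (p : letter) (n : nat) :=
  \sum_(t : n.-tuple letter) (reduced (p :: t) && in_coset H x t : nat).

Lemma coset_sphere_after_rec H x p n :
  coset_sphere_after H x p n.+1 =
    \sum_(l : letter) (l != linv p) * coset_sphere_after H (linv l :: x) l n.
Proof.
rewrite /coset_sphere_after (big_tuple_cons _ _ (fun t =>
  (reduced (p :: t) && in_coset H x t : nat))); apply: eq_bigr => l _.
rewrite big_distrr; apply: eq_bigr => t _ /=.
case: (l != linv p) => //=; rewrite mul1n.
by case lt_red: (path _ l _) => //=; rewrite in_coset_cons.
Qed.

Lemma coset_sphere_card_rec H y n :
  coset_sphere_card H y n.+1 = \sum_(l : letter) coset_sphere_after H (linv l :: y) l n.
Proof.
rewrite /coset_sphere_card count_sphere (big_tuple_cons _ _ (fun t =>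
  (reduced t && in_coset H y t : nat))); apply: eq_bigr => l _.
apply: eq_bigr => t _.
by case lt_red: (reduced (l :: t)) => //=; rewrite in_coset_cons.
Qed.

Lemma eq_coset_sphere_after H x z :
  in_coset H x =1 in_coset H z -> coset_sphere_after H x =2 coset_sphere_after H z.
Proof. by move=> xz p n; apply: eq_bigr => t _; rewrite xz. Qed.

Local Open Scope ring_scope.

Lemma sum_indicator (R : nzSemiRingType) (I : finType) (j0 : I) (g : I -> R) :
  \sum_j (j == j0)%:R * g j = g j0.
Proof.
rewrite (bigD1 j0) //= eqxx mul1r big1 ?addr0 // => j /negbTE ->.
by rewrite mul0r.
Qed.

Lemma sum_point_mass (R : numFieldType) (T : eqType) (s : seq T) (r0 : T)
    (K : R) (f : T -> R) :
  r0 \in s ->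
  \sum_(r <- s) (if r == r0 then K / (count_mem r0 s)%:R else 0) * f r = K * f r0.
Proof.
move=> r0_in; set c := (count_mem r0 s)%:R.
have c_neq0 : c != 0 by rewrite pnatr_eq0 -lt0n -has_count has_pred1.
rewrite (eq_bigr (fun r => if r == r0 then K / c * f r0 else 0)).
  by rewrite -big_mkcond /= big_const_seq iter_addr_0 -mulr_natr -/c mulrAC divfK.
by move=> r _; case: eqP => [->|_]; rewrite ?mul0r.
Qed.

Lemma coset_sphere_card_linear_rec (R : comNzRingType) H reps y :
    is_subgroup H -> coset_reps H reps ->
  exists (c : nat -> R) (N : nat), forall m, (N < m)%N ->
    (coset_sphere_card H y m)%:R =
      \sum_(1 <= j < N.+1) c j * (coset_sphere_card H y (m - j))%:R.
Proof.
move=> subH repsH.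
pose V := (letter * 'I_(size reps).+1)%type.
pose rep i := nth [::] reps i.
pose idx := coset_index H reps.
pose v n (q : V) := (coset_sphere_after H (rep q.2) q.1 n)%:R : R.
pose M (q q' : V) := (q'.1 != linv q.1)%:R * (q'.2 == idx (linv q'.1 :: rep q.2))%:R : R.
pose u (q : V) := (q.2 == idx (linv q.1 :: y))%:R : R.
have sum_pair (F : V -> R) : \sum_q F q = \sum_l \sum_j F (l, j).
  by rewrite pair_big; apply: eq_bigr => -[].
have idxP x : in_coset H x =1 in_coset H (rep (idx x)) := coset_indexP _ subH _ repsH x.
apply: (@finite_linear_system_rec R V M u v) => [n [p i]|n].
  rewrite sum_pair /v /M coset_sphere_after_rec natr_sum; apply: eq_bigr => l _ /=.
  under eq_bigr do rewrite -mulrA.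
  by rewrite -mulr_sumr sum_indicator natrM -(eq_coset_sphere_after _ _ _ (idxP _)).
rewrite sum_pair /u /v coset_sphere_card_rec natr_sum; apply: eq_bigr => l _ /=.
by rewrite sum_indicator -(eq_coset_sphere_after _ _ _ (idxP _)).
Qed.

Theorem theorem1p2 (H : pred word) (hH : is_subgroup H) (hfin : finite_index H)
  (hodd : exists2 h, H h & odd (size h)) (y : word) (hy : reduced y)
  (reps : seq word) (hreps : coset_reps H reps) :
  exists (a : nat -> word -> rat) (N : nat),
    forall n : nat, (N.+1 <= n)%N ->
      (coset_sphere_card H y n)%:R =
        \sum_(1 <= i < N.+1) \sum_(r <- reps) a i r * (coset_sphere_card H r (n - i))%:R.
Proof.
have [c [N y_rec]] := coset_sphere_card_linear_rec rat _ _ y hH hreps.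
have [_ [reps_cover _]] := hreps.
have [r0 r0_in r0_y] := reps_cover y hy.
have r0_card m : coset_sphere_card H r0 m = coset_sphere_card H y m.
  exact/eq_count/(in_coset_eq _ hH _ _ r0_y).
(* [reps] may list [r0] several times. *)
exists (fun i r => if r == r0 then c i / (count_mem r0 reps)%:R else 0), N.
move=> n lt_N_n; rewrite y_rec //; apply: eq_bigr => i _.
by rewrite sum_point_mass // r0_card.
Qed.
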